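(* Skeptic can weakly force the event \[ E_4:=\Bigl\{\xi:\ \limsup_{n\to\infty}|s_n|<\infty\ \ \text{or}\ \ \bigl(\limsup_{n\to\infty}s_n=\infty\ \text{and}\ \liminf_{n\to\infty}s_n=-\infty\bigr)\Bigr\}. \]
   Context: Fair-coin game: in rounds $n=1,2,\dots$ Skeptic announces $M_n\in\mathbb{R}$ (depending only on $x_1,\dots,x_{n-1}$), then Reality announces $x_n\in\{-1,1\}$. A path is an infinite sequence $\xi=x_1x_2\cdots\in\{-1,1\}^{\mathbb{N}}$, and $\Omega$ is the set of paths. We write $s_n:=x_1+\cdots+x_n$, with $s_0=0$. The capital process of a strategy with zero initial capital is $\mathcal{K}^{\mathcal{P}}_n=\sum_{k=1}^nM_kx_k$. Skeptic weakly forces $E\subseteq\Omega$ if some strategy $\mathcal{P}$ has $\mathcal{K}^{\mathcal{P}}_n(\xi)\ge-1$ for all $\xi\in\Omega$ and $n\ge0$, and $\limsup_n\mathcal{K}^{\mathcal{P}}_n(\xi)=\infty$ for every $\xi\notin E$. *)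

From Stdlib Require Import Reals List ZArith.
Open Scope R_scope.

(* A path xi = x_1 x_2 ... is encoded as xi : nat -> R with xi k = x_{k+1}. *)
Definition is_path (xi : nat -> R) : Prop := forall k, xi k = 1 \/ xi k = -1.

Fixpoint prefix (xi : nat -> R) (n : nat) : list R :=
  match n with
  | O => nil
  | S m => prefix xi m ++ (xi m :: nil)
  end.

Fixpoint S_n (xi : nat -> R) (n : nat) : R :=
  match n with
  | O => 0
  | S m => S_n xi m + xi m
  end.

(* A strategy: M_n is a function of the history x_1 ... x_{n-1}. *)
Definition strategy := list R -> R.

Fixpoint capital (P : strategy) (xi : nat -> R) (n : nat) : R :=
  match n with
  | O => 0
  | S m => capital P xi m + P (prefix xi m) * xi m
  end.

Definition limsup_infty (u : nat -> R) : Prop := forall C : R, forall N : nat, exists n, (n >= N)%nat /\ u n > C.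
Definition liminf_minfty (u : nat -> R) : Prop := forall C : R, forall N : nat, exists n, (n >= N)%nat /\ u n < C.
Definition limsup_abs_finite (u : nat -> R) : Prop := exists C : R, exists N : nat, forall n, (n >= N)%nat -> Rabs (u n) <= C.

Definition weakly_forces (E : (nat -> R) -> Prop) : Prop :=
  exists P : strategy,
    (forall xi, is_path xi -> forall n, capital P xi n >= -1) /\
    (forall xi, is_path xi -> ~ E xi -> limsup_infty (capital P xi)).

Definition E4 (xi : nat -> R) : Prop :=
  limsup_abs_finite (S_n xi) \/
  (limsup_infty (S_n xi) /\ liminf_minfty (S_n xi)).

(* The contrarian strategy stakes [2^-(m+2)] against a rise, where [m] counts
   how many times the walk has set a new integer record.  Its capital stays
   above [2^-(m+2) (m - s + 2) - 1/2 >= -1/2]: a loss of the stake comes with a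
   new record, which halves every later stake.  On a walk bounded above, [m]
   stays bounded, so the capital grows linearly in [-s] and is unbounded as soon
   as [|s|] is.  A path outside [E4] is unbounded but bounded on one side, so
   the contrarian strategy or its mirror image wins on it. *)
From Stdlib Require Import Reals Lra Lia List Classical.
Open Scope R_scope.

Definition path_opp (xi : nat -> R) : nat -> R := fun k => - xi k.

Definition mirror (P : strategy) : strategy := fun l => - P (map Ropp l).

Definition bounded_above (u : nat -> R) : Prop :=
  exists C N, forall n, (n >= N)%nat -> u n <= C.

Lemma is_path_opp xi : is_path xi -> is_path (path_opp xi).
Proof. intros Hp k; unfold path_opp; destruct (Hp k) as [e|e]; rewrite e; lra. Qed.

Lemma S_n_opp xi n : S_n (path_opp xi) n = - S_n xi n.
Proof. induction n; simpl; [ring | rewrite IHn; unfold path_opp; ring]. Qed.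

Lemma prefix_opp xi n : prefix (path_opp xi) n = map Ropp (prefix xi n).
Proof. induction n; simpl; [reflexivity | rewrite IHn, map_app; reflexivity]. Qed.

Lemma capital_add P Q xi n :
  capital (fun l => P l + Q l) xi n = capital P xi n + capital Q xi n.
Proof. induction n; simpl; [ring | rewrite IHn; ring]. Qed.

Lemma capital_mirror P xi n : capital (mirror P) xi n = capital P (path_opp xi) n.
Proof.
  induction n; simpl; [ring |].
  rewrite IHn, prefix_opp; unfold mirror, path_opp; ring.
Qed.

Lemma S_n_le xi n : is_path xi -> S_n xi n <= INR n.
Proof.
  intros Hp; induction n; simpl S_n; [simpl; lra |].
  rewrite S_INR; destruct (Hp n) as [e|e]; rewrite e; lra.
Qed.

Lemma limsup_abs_finite_opp xi :
  limsup_abs_finite (S_n (path_opp xi)) <-> limsup_abs_finite (S_n xi).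
Proof.
  unfold limsup_abs_finite.
  split; intros [C [N HC]]; exists C, N; intros n Hn; specialize (HC n Hn);
    rewrite ?S_n_opp, ?Rabs_Ropp in *; trivial.
Qed.

Lemma bounded_above_of_not_limsup_infty u : ~ limsup_infty u -> bounded_above u.
Proof.
  intros H; apply NNPP; intros Hb; apply H; intros C N; apply NNPP; intros Hn.
  apply Hb; exists C, N; intros n Hge; apply Rnot_lt_le; intros Hlt.
  apply Hn; exists n; split; assumption.
Qed.

Lemma bounded_above_opp_of_not_liminf_minfty xi :
  ~ liminf_minfty (S_n xi) -> bounded_above (S_n (path_opp xi)).
Proof.
  intros H; apply bounded_above_of_not_limsup_infty; intros Hsup; apply H.
  intros C N; destruct (Hsup (- C) N) as [n [Hn Hs]].
  exists n; split; [assumption |]; rewrite S_n_opp in Hs; lra.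
Qed.

Lemma limsup_infty_shift u v c :
  limsup_infty u -> (forall n, u n + c <= v n) -> limsup_infty v.
Proof.
  intros Hu Huv C N; destruct (Hu (C - c) N) as [n [Hn Hgt]].
  exists n; split; [assumption |]; specialize (Huv n); lra.
Qed.

(* A strategy sees only the history, so the record level [m] is recomputed by a
   left fold that also carries the running sum [s]. *)
Definition level_step (st : nat * R) (x : R) : nat * R :=
  let (m, s) := st in
  if Rlt_dec (INR m) (s + x) then (S m, s + x) else (m, s + x).

Definition level_state (l : list R) : nat * R := fold_left level_step l (0%nat, 0).

Definition level (xi : nat -> R) (n : nat) : nat := fst (level_state (prefix xi n)).

Definition stake (m : nat) : R := (/2) ^ (m + 2).

Definition contrarian : strategy := fun l => - stake (fst (level_state l)).

Lemma level_state_S xi n :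
  level_state (prefix xi (S n)) = level_step (level_state (prefix xi n)) (xi n).
Proof. unfold level_state; simpl; rewrite fold_left_app; reflexivity. Qed.

Lemma level_state_snd xi n : snd (level_state (prefix xi n)) = S_n xi n.
Proof.
  induction n; [reflexivity |].
  rewrite level_state_S; destruct (level_state (prefix xi n)) as [m s].
  simpl in *; subst; destruct Rlt_dec; reflexivity.
Qed.

Lemma level_S xi n : level xi (S n) =
  if Rlt_dec (INR (level xi n)) (S_n xi (S n)) then S (level xi n) else level xi n.
Proof.
  unfold level; pose proof (level_state_snd xi n) as Hs; rewrite level_state_S.
  destruct (level_state (prefix xi n)) as [m s]; simpl in *; subst.
  destruct Rlt_dec; reflexivity.
Qed.

Lemma capital_contrarian_S xi n :
  capital contrarian xi (S n) = capital contrarian xi n - stake (level xi n) * xi n.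
Proof. simpl; unfold contrarian, level; ring. Qed.

Lemma stake_pos m : 0 < stake m.
Proof. apply pow_lt; lra. Qed.

Lemma stake_S m : stake (S m) = stake m / 2.
Proof. unfold stake; replace (S m + 2)%nat with (S (m + 2)) by lia; simpl; field. Qed.

Lemma stake_le m k : (m <= k)%nat -> stake k <= stake m.
Proof.
  induction 1 as [| k _ IH]; [lra |].
  rewrite stake_S; pose proof (stake_pos k); lra.
Qed.

Lemma contrarian_invariant xi n : is_path xi ->
  S_n xi n <= INR (level xi n) /\
  capital contrarian xi n >= stake (level xi n) * (INR (level xi n) - S_n xi n + 2) - 1/2.
Proof.
  intros Hp; induction n as [| n [Hle Hcap]].
  { simpl; unfold level, stake; simpl; lra. }
  rewrite capital_contrarian_S, level_S; simpl S_n.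
  pose proof (stake_pos (level xi n)).
  set (w := stake (level xi n)) in *; set (m := INR (level xi n)) in *.
  set (s := S_n xi n) in *.
  destruct Rlt_dec as [Hrec | Hrec].
  - destruct (Hp n) as [e|e]; rewrite e in *; [| lra].
    rewrite stake_S, S_INR; fold w m; split; [lra |].
    (* the lost stake [w] is paid for by halving the bound [w (m - s + 2) >= 2 w] *)
    assert (0 <= w * (m - s)) by (apply Rmult_le_pos; lra).
    assert (w / 2 * (m + 1 - (s + 1) + 2) = w * (m - s + 2) - w - w * (m - s) / 2)
      by field.
    lra.
  - fold w m; split; [lra |].
    assert (w * (m - (s + xi n) + 2) = w * (m - s + 2) - w * xi n) by ring.
    lra.
Qed.

Lemma capital_contrarian_ge xi n : is_path xi -> capital contrarian xi n >= -1/2.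
Proof.
  intros Hp; destruct (contrarian_invariant xi n Hp) as [Hle Hcap].
  pose proof (stake_pos (level xi n)).
  assert (0 <= stake (level xi n) * (INR (level xi n) - S_n xi n + 2))
    by (apply Rmult_le_pos; lra).
  lra.
Qed.

Lemma level_le xi D : is_path xi -> (forall n, S_n xi n <= INR D) ->
  forall n, (level xi n <= D)%nat.
Proof.
  intros Hp HD n; induction n as [| n IH]; [unfold level; simpl; lia |].
  rewrite level_S; destruct Rlt_dec as [Hrec |]; [| lia].
  specialize (HD (S n)).
  assert (Hlt : INR (level xi n) < INR D) by lra; apply INR_lt in Hlt; lia.
Qed.

Lemma bounded_above_uniform xi : is_path xi -> bounded_above (S_n xi) ->
  exists D, forall n, S_n xi n <= INR D.
Proof.
  intros Hp [C [N HC]]; destruct (INR_unbounded C) as [D0 HD0].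
  exists (Nat.max D0 N); intros n.
  destruct (Compare_dec.le_lt_dec N n) as [Hn | Hn].
  - specialize (HC n Hn); assert (INR D0 <= INR (Nat.max D0 N)) by (apply le_INR; lia).
    lra.
  - pose proof (S_n_le xi n Hp); assert (INR n <= INR (Nat.max D0 N)) by (apply le_INR; lia).
    lra.
Qed.

Lemma contrarian_wins xi : is_path xi ->
  bounded_above (S_n xi) -> ~ limsup_abs_finite (S_n xi) ->
  limsup_infty (capital contrarian xi).
Proof.
  intros Hp Hb Hnf C N.
  destruct (bounded_above_uniform xi Hp Hb) as [D HD].
  pose proof (stake_pos D) as HwD.
  set (B := Rmax (INR D) ((C + 1) / stake D)).
  assert (Hex : exists n, (n >= N)%nat /\ Rabs (S_n xi n) > B).
  { apply NNPP; intros H; apply Hnf; exists B, N; intros n Hn.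
    apply Rnot_lt_le; intros Hgt; apply H; exists n; split; assumption. }
  destruct Hex as [n [Hn Hab]]; exists n; split; [assumption |].
  assert (Hs : S_n xi n < - B).
  { pose proof (HD n); pose proof (Rmax_l (INR D) ((C + 1) / stake D)) as HDB.
    fold B in HDB; unfold Rabs in Hab; destruct Rcase_abs; lra. }
  assert (HB : B * stake D >= C + 1).
  { pose proof (Rmax_r (INR D) ((C + 1) / stake D)) as HCB; fold B in HCB.
    assert ((C + 1) / stake D * stake D = C + 1) by (field; lra); nra. }
  destruct (contrarian_invariant xi n Hp) as [Hle Hcap].
  assert (Hw : stake D <= stake (level xi n)) by exact (stake_le _ _ (level_le xi D Hp HD n)).
  pose proof (pos_INR (level xi n)).
  assert (0 <= stake (level xi n) * (INR (level xi n) + 2)) by (apply Rmult_le_pos; lra).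
  nra.
Qed.

Theorem corollary2 : weakly_forces E4.
Proof.
  exists (fun l => contrarian l + mirror contrarian l); split.
  - intros xi Hp n; rewrite capital_add, capital_mirror.
    pose proof (capital_contrarian_ge xi n Hp).
    pose proof (capital_contrarian_ge (path_opp xi) n (is_path_opp xi Hp)).
    lra.
  - intros xi Hp HE; apply not_or_and in HE as [Hnf Hosc].
    destruct (classic (limsup_infty (S_n xi))) as [Hsup | Hsup].
    + assert (Hb : bounded_above (S_n (path_opp xi)))
        by (apply bounded_above_opp_of_not_liminf_minfty; tauto).
      rewrite <- limsup_abs_finite_opp in Hnf.
      apply (limsup_infty_shift _ _ (-1/2)
               (contrarian_wins _ (is_path_opp xi Hp) Hb Hnf)).
      intros n; rewrite capital_add, capital_mirror.
      pose proof (capital_contrarian_ge xi n Hp); lra.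
    + apply (limsup_infty_shift _ _ (-1/2)
               (contrarian_wins xi Hp (bounded_above_of_not_limsup_infty _ Hsup) Hnf)).
      intros n; rewrite capital_add, capital_mirror.
      pose proof (capital_contrarian_ge (path_opp xi) n (is_path_opp xi Hp)); lra.
Qed.
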